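(* Let $PC_n^1$ be the polyomino chain with $n$ squares and exactly two segments $s_1,s_2$ with lengths $l_1=2$ and $l_2=n-1$. Then $ZC_1(PC_n^1)=32n-30-2I_{\{n=4\}}$ for $n\ge 4$, and $ZC_2(PC_n^1)=48n-58-I_{\{n=5\}}$ for $n\ge 5$.
   Context: A polyomino chain with $n$ squares is a sequence of $n$ unit squares in the plane in which consecutive squares share exactly one edge and the centers of consecutive squares form a path; it is regarded as the graph whose vertices are the corners of the squares and whose edges are the sides of the squares. A square is terminal if it has exactly one adjacent square, kink if it has two adjacent squares and contains a vertex of degree 2. A segment is a maximal linear (straight) subchain, including the kink and/or terminal squares at its ends; consecutive segments share a kink square, and the length of a segment is its number of squares. For a vertex $v$, $\tau_v$ is the number of vertices at distance exactly $2$ from $v$; $ZC_1(G)=\sum_{v\in V(G)}\tau_v^2$ and $ZC_2(G)=\sum_{uv\in E(G)}\tau_u\tau_v$. $I_{\{A\}}$ is the indicator of condition $A$. *)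

From mathcomp Require Import all_boot all_order all_algebra.
Set Implicit Arguments. Unset Strict Implicit. Unset Printing Implicit Defensive.
Import Order.TTheory GRing.Theory Num.Theory.

Definition point := (int * int)%type.

(* A unit square (cell) is identified by its lower-left corner (x,y);
   it is [x,x+1] x [y,y+1]. A polyomino is given by its list of cells. *)
Definition corners (c : point) : seq point :=
  [:: (c.1, c.2); (c.1 + 1, c.2)%R; (c.1, c.2 + 1)%R; (c.1 + 1, c.2 + 1)%R].

Definition pverts (cells : seq point) : seq point :=
  undup (flatten (map corners cells)).

Definition unit_apart (u v : point) : bool :=
  ((`|u.1 - v.1|%N + `|u.2 - v.2|%N) == 1)%N.

Definition padj (cells : seq point) (u v : point) : bool :=
  unit_apart u v && has (fun c => (u \in corners c) && (v \in corners c)) cells.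

Fixpoint reach (cells : seq point) (k : nat) (u v : point) : bool :=
  match k with
  | 0 => u == v
  | k'.+1 => reach cells k' u v ||
             has (fun w => padj cells u w && reach cells k' w v) (pverts cells)
  end.

Definition at_dist (cells : seq point) (k : nat) (u v : point) : bool :=
  reach cells k u v && (if k is k'.+1 then ~~ reach cells k' u v else true).

Definition tau (cells : seq point) (v : point) : nat :=
  count (fun u => at_dist cells 2 v u) (pverts cells).

Definition ZC1 (cells : seq point) : nat :=
  \sum_(v <- pverts cells) (tau cells v) ^ 2.

(* ZC_2(G) = sum over edges uv of tau_u * tau_v; each (unordered) edge is
   counted once, as the pair of its endpoints with indices i < j in the
   duplicate-free vertex list. *)
Definition ZC2 (cells : seq point) : nat :=
  let V := pverts cells in
  \sum_(i < size V) \sum_(j < size V | (i < j)%N && padj cells (nth (0,0)%R V i) (nth (0,0)%R V j))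
     tau cells (nth (0,0)%R V i) * tau cells (nth (0,0)%R V j).

(* PC_n^1 : the polyomino chain with n squares and exactly two segments,
   of lengths l1 = 2 and l2 = n - 1:
   square (1,0), kink square (0,0), then squares (0,1), ..., (0,n-2). *)
Definition PC1 (n : nat) : seq point :=
  (Posz 1, Posz 0) :: (Posz 0, Posz 0) :: [seq (Posz 0, Posz i.+1) | i <- iota 0 (n - 2)].

From mathcomp Require Import all_boot all_order all_algebra zify.
From Stdlib Require Import FunctionalExtensionality.
Import GRing.Theory.
Set Implicit Arguments. Unset Strict Implicit.
Local Open Scope ring_scope.

(* The number tau_v of vertices at distance 2 from v only depends on the
   squares near v, so it is a function [local_tau] of the polyomino seen from
   v; the same holds for the contribution tau_v * sum_(w ~ v) tau_w of v to
   2 ZC_2. The vertices of PC_n^1 are the two columns x = 0, 1 of height n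
   together with (2,0) and (2,1). A vertex far from both ends of the chain sees
   an infinite strip, and a vertex near an end sees what it would see in a
   fixed infinite model of that end. Hence for n >= 10 both indices are affine
   in n, with coefficients obtained by evaluating finitely many local
   quantities; the cases n < 10 are evaluated directly. *)

Definition addp (u v : point) : point := (u.1 + v.1, u.2 + v.2).
Definition origin : point := (0, 0).

Definition unit_steps : seq point := [:: (1, 0); (-1, 0); (0, 1); (0, -1)].
Definition dist2_steps : seq point :=
  [:: (2, 0); (-2, 0); (0, 2); (0, -2); (1, 1); (1, -1); (-1, 1); (-1, -1)].
Definition cells_at (u : point) : seq point :=
  [:: u; addp u (-1, 0); addp u (0, -1); addp u (-1, -1)].

Lemma addp0 v : addp v origin = v.
Proof. by case: v => a b; rewrite /addp /= !addr0. Qed.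

Lemma addpA u d e : addp (addp u d) e = addp u (addp d e).
Proof. by case: u d e => a b [x y] [x' y']; rewrite /addp /= !addrA. Qed.

Lemma addpI v : injective (addp v).
Proof. by case: v => a b [x y] [x' y'] [/addrI -> /addrI ->]. Qed.

Lemma mem_map_addp v x s : (addp v x \in map (addp v) s) = (x \in s).
Proof. exact/mem_map/addpI. Qed.

Lemma corners_addp v c : corners (addp v c) = map (addp v) (corners c).
Proof. by case: v c => a b [x y]; rewrite /corners /addp /= !addrA. Qed.

Lemma cells_at_addp v c : cells_at (addp v c) = map (addp v) (cells_at c).
Proof. by case: v c => a b [x y]; rewrite /cells_at /addp /= !addrA. Qed.

Lemma mem_corners u c : (u \in corners c) = (c \in cells_at u).
Proof.
case: u c => [a b] [x y]; rewrite /corners /cells_at /addp /= !inE !xpair_eqE.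
by apply/idP/idP; lia.
Qed.

Lemma unit_apart_addp v d e : unit_apart (addp v d) (addp v e) = unit_apart d e.
Proof.
case: v d e => a b [x y] [x' y']; rewrite /unit_apart /addp /=.
have cancel (p q r : int) : (p + q) - (p + r) = q - r by lia.
by rewrite !cancel.
Qed.

Lemma unit_apart_step u w : unit_apart u w -> exists2 e, e \in unit_steps & w = addp u e.
Proof.
case: u w => a b [x y]; rewrite /unit_apart /= => uw.
exists (x - a, y - b); last by rewrite /addp /=; congr pair; lia.
by rewrite !inE !xpair_eqE; lia.
Qed.

Lemma addp_unit_steps e e' : e \in unit_steps -> e' \in unit_steps ->
  (addp e e' == origin) || (addp e e' \in dist2_steps).
Proof.
have all_sums : all (fun e => all (fun e' =>
    (addp e e' == origin) || (addp e e' \in dist2_steps)) unit_steps) unit_steps.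
  by vm_compute.
by move=> /(allP all_sums) /allP; apply.
Qed.

Lemma mem_pverts cells u : (u \in pverts cells) = has (mem cells) (cells_at u).
Proof.
rewrite /pverts mem_undup.
by apply/flatten_mapP/hasP => -[c c_in u_c]; exists c; rewrite // mem_corners in u_c *.
Qed.

Lemma padj_pverts cells u w : padj cells u w -> w \in pverts cells.
Proof.
case/andP=> _ /hasP[c c_in /andP[_ w_c]].
by rewrite /pverts mem_undup; apply/flatten_mapP; exists c.
Qed.

Lemma padj_sym cells u w : padj cells u w = padj cells w u.
Proof.
rewrite /padj /unit_apart -(abszN (u.1 - w.1)) -(abszN (u.2 - w.2)) !opprB.
by congr andb; apply: eq_has => c; rewrite andbC.
Qed.

Lemma padj_irr cells u : padj cells u u = false.
Proof. by rewrite /padj /unit_apart !subrr. Qed.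

Definition view (cells : seq point) (v : point) : point -> bool :=
  fun c => addp v c \in cells.

Definition shift (v : point) (T : point -> bool) : point -> bool :=
  fun c => T (addp v c).

Lemma view_addp cells v e : view cells (addp v e) = shift e (view cells v).
Proof. by apply: functional_extensionality => c; rewrite /view /shift addpA. Qed.

Definition local_adj (T : point -> bool) (d e : point) : bool :=
  unit_apart d e && has (fun c => T c && (e \in corners c)) (cells_at d).

Definition local_tau (T : point -> bool) : nat :=
  count (fun d => ~~ local_adj T origin d &&
    has (fun e => local_adj T origin e && local_adj T e d) unit_steps) dist2_steps.

Definition local_edge_sum (T : point -> bool) : nat :=
  (local_tau T * \sum_(e <- unit_steps | local_adj T origin e) local_tau (shift e T))%N.

Lemma padj_view cells v d e :
  padj cells (addp v d) (addp v e) = local_adj (view cells v) d e.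
Proof.
rewrite /padj /local_adj unit_apart_addp; congr andb; apply/hasP/hasP.
- case=> c c_in /andP[]; rewrite mem_corners cells_at_addp => /mapP[c0 c0_in c_def].
  rewrite c_def corners_addp mem_map_addp in c_in * => e_c0.
  by exists c0 => //; apply/andP.
- case=> c0 c0_in /andP[c_in e_c0]; exists (addp v c0) => //.
  by rewrite mem_corners cells_at_addp !mem_map_addp c0_in corners_addp mem_map_addp.
Qed.

Lemma padj_view0 cells v e : padj cells v (addp v e) = local_adj (view cells v) origin e.
Proof. by rewrite -padj_view addp0. Qed.

Lemma has_padj_unit_steps cells v (q : pred point) :
  has (fun w => padj cells v w && q w) (pverts cells) =
  has (fun e => padj cells v (addp v e) && q (addp v e)) unit_steps.
Proof.
apply/hasP/hasP => [[w _ /andP[vw qw]]|[e _ /andP[ve qe]]].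
- have /andP[/unit_apart_step[e e_in w_def] _] := vw.
  by exists e; rewrite // -w_def vw.
- by exists (addp v e); [exact: padj_pverts ve | rewrite ve].
Qed.

Lemma has_andb_eq (T : eqType) (P : pred T) (s : seq T) u :
  has (fun w => P w && (w == u)) s = (u \in s) && P u.
Proof.
apply/hasP/andP => [[w w_in /andP[Pw /eqP <-]] // | [u_in Pu]].
by exists u; rewrite ?Pu ?eqxx.
Qed.

Lemma reach1E cells a u : u \in pverts cells ->
  reach cells 1 a u = (a == u) || padj cells a u.
Proof. by move=> u_in /=; rewrite has_andb_eq u_in. Qed.

Lemma at_dist2E cells v u : u \in pverts cells ->
  at_dist cells 2 v u = [&& v != u, ~~ padj cells v u &
    has (fun e => padj cells v (addp v e) && padj cells (addp v e) u) unit_steps].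
Proof.
move=> u_in.
have reach2 : reach cells 2 v u = reach cells 1 v u ||
  has (fun w => padj cells v w && reach cells 1 w u) (pverts cells) by [].
rewrite /at_dist reach2 (@eq_has _ _ (predU (fun w => padj cells v w && (w == u))
                                           (fun w => padj cells v w && padj cells w u))).
  rewrite has_predU has_andb_eq u_in reach1E //.
  rewrite (has_padj_unit_steps cells v (fun w => padj cells w u)).
  by case: (v == u); case: (padj cells v u); case: has.
by move=> w; rewrite reach1E // andb_orr.
Qed.

Lemma perm_filter_uniq (T : eqType) (P : pred T) (s1 s2 : seq T) :
  uniq s1 -> uniq s2 -> (forall x, P x -> (x \in s1) = (x \in s2)) ->
  perm_eq (filter P s1) (filter P s2).
Proof.
move=> s1_uniq s2_uniq s12; apply: uniq_perm; rewrite ?filter_uniq // => x.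
by rewrite !mem_filter; case Px: (P x); rewrite //= s12.
Qed.

Lemma tau_view cells v : tau cells v = local_tau (view cells v).
Proof.
pose P u := [&& v != u, ~~ padj cells v u &
  has (fun e => padj cells v (addp v e) && padj cells (addp v e) u) unit_steps].
have -> : tau cells v = count P (pverts cells) by apply: eq_in_count => u /at_dist2E.
have P_near u : P u -> (u \in pverts cells) = (u \in map (addp v) dist2_steps).
  case/and3P=> vu _ /hasP[e e_in /andP[_ eu]].
  have /andP[/unit_apart_step[e' e'_in u_def] _] := eu.
  rewrite (padj_pverts eu) u_def addpA mem_map_addp.
  case/orP: (addp_unit_steps e_in e'_in) => // /eqP e0.
  by rewrite u_def addpA e0 addp0 eqxx in vu.
have addp_uniq : uniq (map (addp v) dist2_steps) by rewrite map_inj_uniq //; exact: addpI.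
rewrite -!size_filter (perm_size (perm_filter_uniq (undup_uniq _) addp_uniq P_near)).
rewrite size_filter count_map; apply: eq_in_count => d d_in; rewrite /= /P.
have -> : v != addp v d.
  by rewrite -{1}[v]addp0 (inj_eq (@addpI v)); apply: contraTneq d_in => <-.
by rewrite padj_view0; under eq_has => e do rewrite padj_view0 padj_view.
Qed.

Lemma ZC1_view cells :
  ZC1 cells = (\sum_(u <- pverts cells) local_tau (view cells u) ^ 2)%N.
Proof. by apply: eq_bigr => u _; rewrite tau_view. Qed.

Lemma ZC2_double cells : (2 * ZC2 cells = \sum_(u <- pverts cells)
   \sum_(w <- pverts cells | padj cells u w) tau cells u * tau cells w)%N.
Proof.
set V := pverts cells; set N := size V; pose f i := nth (0, 0) V i.
pose F i j := (tau cells (f i) * tau cells (f j))%N.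
have -> : ZC2 cells =
    (\sum_(0 <= i < N) \sum_(0 <= j < N | (i < j)%N && padj cells (f i) (f j)) F i j)%N.
  by rewrite /ZC2 big_mkord; apply: eq_bigr => i _; rewrite big_mkord.
have -> : (\sum_(u <- V) \sum_(w <- V | padj cells u w) tau cells u * tau cells w =
    \sum_(0 <= i < N) \sum_(0 <= j < N | padj cells (f i) (f j)) F i j)%N.
  by rewrite (big_nth (0, 0)); apply: eq_bigr => i _; rewrite (big_nth (0, 0)).
rewrite mul2n -addnn.
have split_j i : (\sum_(0 <= j < N | padj cells (f i) (f j)) F i j =
    \sum_(0 <= j < N | (i < j)%N && padj cells (f i) (f j)) F i j +
    \sum_(0 <= j < N | (j < i)%N && padj cells (f i) (f j)) F i j)%N.
  rewrite (bigID (fun j => (i < j)%N)) /=; congr addn; apply: eq_bigl => j.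
    by rewrite andbC.
  by case: ltngtP => [||->]; rewrite ?andbF ?andbT ?padj_irr.
rewrite (eq_bigr _ (fun i _ => split_j i)) big_split /=; congr addn.
rewrite (exchange_big_dep_nat predT) //=; apply: eq_bigr => i _.
by apply: eq_big => [j|j _]; [rewrite padj_sym | rewrite /F mulnC].
Qed.

Lemma ZC2_view cells :
  (2 * ZC2 cells = \sum_(u <- pverts cells) local_edge_sum (view cells u))%N.
Proof.
rewrite ZC2_double; apply: eq_bigr => u _; rewrite -big_distrr /= tau_view.
have near_u w : padj cells u w -> (w \in pverts cells) = (w \in map (addp u) unit_steps).
  move=> uw; rewrite (padj_pverts uw).
  by have /andP[/unit_apart_step[e e_in ->] _] := uw; rewrite mem_map_addp e_in.
have addp_uniq : uniq (map (addp u) unit_steps) by rewrite map_inj_uniq //; exact: addpI.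
rewrite -big_filter (perm_big _ (perm_filter_uniq (undup_uniq _) addp_uniq near_u)).
rewrite big_filter big_map /local_edge_sum; congr muln.
by apply: eq_big => [e|e _]; rewrite ?padj_view0 // tau_view view_addp.
Qed.

Definition window (r : int) (T : point -> bool) : point -> bool :=
  fun c => [&& - r <= c.1 <= r, - r <= c.2 <= r & T c].

(* [vm_compute] normalises both sides to the same term in the unknown [T]:
   every cell inspected lies within distance 4 of the origin. *)
Lemma local_tau_window T : local_tau T = local_tau (window 4 T).
Proof. by vm_compute. Qed.

Lemma local_edge_sum_window T : local_edge_sum T = local_edge_sum (window 4 T).
Proof. by rewrite /local_edge_sum unlock; vm_compute. Qed.

Definition column (x : int) (n : nat) : seq point := [seq (x, Posz j) | j <- iota 0 n].
Definition PC1_vertices (n : nat) : seq point :=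
  (2, 0) :: (2, 1) :: column 0 n ++ column 1 n.

Lemma mem_column x n (u : point) :
  (u \in column x n) = [&& u.1 == x, 0 <= u.2 & u.2 < Posz n].
Proof.
case: u => a b /=; apply/mapP/idP => [[j j_in [-> ->]]|].
  by rewrite mem_iota in j_in; lia.
case: b => j b_range; last by lia.
exists j; first by rewrite mem_iota; lia.
by congr pair; lia.
Qed.

Lemma mem_PC1 n (a b : int) : (2 <= n)%N ->
  ((a, b) \in PC1 n) = (a == 1) && (b == 0) || [&& a == 0, 0 <= b & b + 2 <= Posz n].
Proof.
move=> n_ge; rewrite !inE !xpair_eqE.
have -> : ((a, b) \in [seq (Posz 0, Posz i.+1) | i <- iota 0 (n - 2)]) =
    [&& a == 0, 1 <= b & b <= Posz (n - 2)].
  apply/mapP/idP => [[j j_in [-> ->]]|]; first by rewrite mem_iota in j_in; lia.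
  case: b => j b_range; last by lia.
  exists j.-1; first by rewrite mem_iota; lia.
  by congr pair; lia.
by apply/idP/idP; lia.
Qed.

Lemma PC1_vertices_uniq n : uniq (PC1_vertices n).
Proof.
have column_inj x : injective (fun j : nat => (x, Posz j) : point) by move=> i j [].
rewrite /= !inE !mem_cat !mem_column cat_uniq !(map_inj_uniq (column_inj _)) iota_uniq /=.
by rewrite andbT; apply/hasP => -[u]; rewrite !mem_column; lia.
Qed.

Lemma perm_pverts_PC1 n : (2 <= n)%N -> perm_eq (pverts (PC1 n)) (PC1_vertices n).
Proof.
move=> n_ge; apply: uniq_perm; rewrite ?undup_uniq ?PC1_vertices_uniq // => -[a b].
rewrite mem_pverts /= !mem_PC1 // !inE mem_cat !mem_column !xpair_eqE /=.
by apply/idP/idP; lia.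
Qed.

Lemma ZC1_PC1 n : (2 <= n)%N ->
  ZC1 (PC1 n) = (\sum_(u <- PC1_vertices n) local_tau (view (PC1 n) u) ^ 2)%N.
Proof. by move=> n_ge; rewrite ZC1_view; apply/perm_big/perm_pverts_PC1. Qed.

Lemma ZC2_PC1 n : (2 <= n)%N ->
  (2 * ZC2 (PC1 n) = \sum_(u <- PC1_vertices n) local_edge_sum (view (PC1 n) u))%N.
Proof. by move=> n_ge; rewrite ZC2_view; apply/perm_big/perm_pverts_PC1. Qed.

(* Infinite models of PC_n^1 near its foot, in its middle and near its top
   end; [top_end] has its top square at the origin. *)
Definition foot : point -> bool := fun c => (c == (1, 0)) || (c.1 == 0) && (0 <= c.2).
Definition strip : point -> bool := fun c => c.1 == 0.
Definition top_end : point -> bool := fun c => (c.1 == 0) && (c.2 <= 0).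

Lemma window_view_PC1_foot n x j : (10 <= n)%N -> (j <= 4)%N ->
  window 4 (view (PC1 n) (x, Posz j)) = window 4 (shift (x, Posz j) foot).
Proof.
move=> n_ge j_le; apply: functional_extensionality => -[a b].
rewrite /window /view /shift /foot /addp /= mem_PC1 ?xpair_eqE /=; last by lia.
by apply/idP/idP; lia.
Qed.

Lemma window_view_PC1_strip n x j : (5 <= j)%N -> (j + 6 <= n)%N ->
  window 4 (view (PC1 n) (x, Posz j)) = window 4 (shift (x, 0) strip).
Proof.
move=> j_ge j_le; apply: functional_extensionality => -[a b].
rewrite /window /view /shift /strip /addp /= mem_PC1; last by lia.
by apply/idP/idP; lia.
Qed.

Lemma window_view_PC1_top n x i : (10 <= n)%N -> (i < 5)%N ->
  window 4 (view (PC1 n) (x, Posz (n - 5 + i))) = window 4 (shift (x, Posz i - 3) top_end).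
Proof.
move=> n_ge i_lt; apply: functional_extensionality => -[a b].
rewrite /window /view /shift /top_end /addp /= mem_PC1; last by lia.
by apply/idP/idP; lia.
Qed.

Section LocalSums.

Variable G : (point -> bool) -> nat.
Hypothesis G_window : forall T, G T = G (window 4 T).

Lemma sum_column_PC1 x n : (10 <= n)%N ->
  (\sum_(u <- column x n) G (view (PC1 n) u) =
   \sum_(0 <= j < 5) G (shift (x, Posz j) foot) + (n - 10) * G (shift (x, 0%R) strip) +
   \sum_(0 <= i < 5) G (shift (x, (Posz i - 3)%R) top_end))%N.
Proof.
move=> n_ge; have n_split : n = (5 + ((n - 10) + 5))%N by lia.
rewrite big_map {1}n_split !iotaD !big_cat add0n -[RHS]addnA; congr (_ + (_ + _))%N.
- apply: eq_big_seq => j; rewrite mem_iota => j_range.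
  by rewrite G_window window_view_PC1_foot -?G_window //; lia.
- rewrite (eq_big_seq (fun=> G (shift (x, 0%R) strip))); last first.
    move=> j; rewrite mem_iota => j_range.
    by rewrite G_window window_view_PC1_strip -?G_window //; lia.
  by rewrite big_const_seq count_predT size_iota iter_addn_0 mulnC.
- rewrite -[(5 + (n - 10))%N]addn0 iotaDl big_map; apply: eq_big_seq => i.
  rewrite mem_iota => i_range; have -> : (5 + (n - 10) + i = n - 5 + i)%N by lia.
  by rewrite G_window window_view_PC1_top -?G_window //; lia.
Qed.

Definition column_ends (x : int) : nat :=
  (\sum_(0 <= j < 5) G (shift (x, Posz j) foot) +
   \sum_(0 <= i < 5) G (shift (x, (Posz i - 3)%R) top_end))%N.

Definition PC1_ends : nat :=
  (G (shift (2%R, Posz 0) foot) + G (shift (2%R, Posz 1) foot) +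
   column_ends 0 + column_ends 1)%N.

Lemma sum_PC1_vertices n : (10 <= n)%N ->
  (\sum_(u <- PC1_vertices n) G (view (PC1 n) u) =
   PC1_ends + (n - 10) * (G (shift (0, 0)%R strip) + G (shift (1, 0)%R strip)))%N.
Proof.
move=> n_ge; rewrite !big_cons big_cat !sum_column_PC1 //.
rewrite G_window window_view_PC1_foot -?G_window //.
rewrite [G (view _ (2, 1))]G_window window_view_PC1_foot -?G_window //.
by rewrite /PC1_ends /column_ends /=; lia.
Qed.

End LocalSums.

Lemma ZC1_PC1_small n : (4 <= n < 10)%N ->
  ZC1 (PC1 n) = (32 * n - 30 - 2 * (n == 4))%N.
Proof.
move=> n_range; rewrite ZC1_PC1; last by lia.
have values : all (fun n => \sum_(u <- PC1_vertices n) local_tau (view (PC1 n) u) ^ 2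
                            == 32 * n - 30 - 2 * (n == 4))%N (iota 4 6).
  by rewrite unlock; vm_compute.
by apply/eqP/(allP values); rewrite mem_iota.
Qed.

Lemma ZC2_PC1_small n : (5 <= n < 10)%N ->
  ZC2 (PC1 n) = (48 * n - 58 - (n == 5))%N.
Proof.
move=> n_range; apply/eqP; rewrite -(eqn_pmul2l (isT : (0 < 2)%N)) ZC2_PC1; last by lia.
have values : all (fun n => \sum_(u <- PC1_vertices n) local_edge_sum (view (PC1 n) u)
                            == 2 * (48 * n - 58 - (n == 5)))%N (iota 5 5).
  by rewrite /local_edge_sum unlock; vm_compute.
by apply: (allP values); rewrite mem_iota.
Qed.

Lemma ZC1_PC1_large n : (10 <= n)%N -> ZC1 (PC1 n) = (32 * n - 30)%N.
Proof.
move=> n_ge; rewrite ZC1_PC1; last by lia.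
have tau2_window T : (local_tau T ^ 2 = local_tau (window 4 T) ^ 2)%N.
  by rewrite -local_tau_window.
rewrite (@sum_PC1_vertices (fun T => local_tau T ^ 2)%N tau2_window n n_ge).
have -> : PC1_ends (fun T => local_tau T ^ 2)%N = 290%N.
  by rewrite /PC1_ends /column_ends unlock; vm_compute.
have -> : (local_tau (shift (0, 0)%R strip) ^ 2 + local_tau (shift (1, 0)%R strip) ^ 2 = 32)%N.
  by vm_compute.
lia.
Qed.

Lemma ZC2_PC1_large n : (10 <= n)%N -> ZC2 (PC1 n) = (48 * n - 58)%N.
Proof.
move=> n_ge; have := ZC2_PC1 (leq_trans (isT : (2 <= 10)%N) n_ge).
rewrite (sum_PC1_vertices local_edge_sum_window n_ge).
have -> : PC1_ends local_edge_sum = 844%N.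
  by rewrite /PC1_ends /column_ends /local_edge_sum unlock; vm_compute.
have -> : (local_edge_sum (shift (0, 0)%R strip) + local_edge_sum (shift (1, 0)%R strip) = 96)%N.
  by rewrite /local_edge_sum unlock; vm_compute.
lia.
Qed.

Theorem corollary1 :
  (forall n : nat, (4 <= n)%N ->
     ZC1 (PC1 n) = (32 * n - 30 - 2 * (n == 4))%N) /\
  (forall n : nat, (5 <= n)%N ->
     ZC2 (PC1 n) = (48 * n - 58 - (n == 5))%N).
Proof.
split=> n n_ge; have [n_small | n_large] := ltnP n 10.
- by apply: ZC1_PC1_small; rewrite n_ge.
- by rewrite ZC1_PC1_large //; lia.
- by apply: ZC2_PC1_small; rewrite n_ge.
- by rewrite ZC2_PC1_large //; lia.
Qed.
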